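(* $\mathsf{LPO}'\equiv_{sW}\mathsf{NEG}$, where $\mathsf{NEG}:\mathcal A_-(2^\mathbb N)\to\{0,1\}$ is given by $\mathsf{NEG}(A)=1$ if $\mu(A)=0$ and $\mathsf{NEG}(A)=0$ otherwise ($\mu$ the uniform measure on $2^\mathbb N$).
   Context: A problem $f:\subseteq X\rightrightarrows Y$ between represented spaces is a partial multi-valued map; $F\vdash f$ means $\delta_YF(p)\in f(\delta_X(p))$ whenever $\delta_X(p)\in\mathrm{dom}(f)$; $f\le_{sW}g$ iff there are computable $H,K$ with $HGK\vdash f$ for all $G\vdash g$, $\equiv_{sW}$ the induced equivalence. $\{0,1\}$ is represented by $p\mapsto p(0)$. $\mathsf{LPO}:\mathbb N^\mathbb N\to\{0,1\}$, $\mathsf{LPO}(p)=0\iff\exists n\;p(n)=0$. $\lim:\subseteq\mathbb{N}^\mathbb{N}\to\mathbb{N}^\mathbb{N}$ maps $\langle p_0,p_1,\dots\rangle$ to $\lim_np_n$; the jump $\mathsf{LPO}'$ is $\mathsf{LPO}$ with input representation $\lim$ (i.e. input $p$ is given via a sequence converging to it). $\mathcal A_-(2^\mathbb N)$ is the space of closed subsets of Cantor space represented by $p\mapsto2^\mathbb N\setminus\bigcup_nB_{p(n)}$ for a standard enumeration $(B_n)$ of basic open balls. *)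

From Stdlib Require Import Reals List Arith PArith.
Import ListNotations.
Set Implicit Arguments.

Definition npair (x y : nat) : nat := (x + y) * (x + y + 1) / 2 + y.

Inductive code : Type :=
| czero : code
| csucc : code
| cfst  : code
| csnd  : code
| cpr   : code -> code -> code
| ccomp : code -> code -> code
| crec  : code -> code -> code
| cmin  : code -> code.

Inductive eval : code -> nat -> nat -> Prop :=
| ev_zero x : eval czero x 0
| ev_succ x : eval csucc x (S x)
| ev_fst x y : eval cfst (npair x y) x
| ev_snd x y : eval csnd (npair x y) y
| ev_pr f g x a b : eval f x a -> eval g x b -> eval (cpr f g) x (npair a b)
| ev_comp f g x a b : eval g x a -> eval f a b -> eval (ccomp f g) x b
| ev_rec0 f g x a : eval f x a -> eval (crec f g) (npair x 0) a
| ev_recS f g x n a b :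
    eval (crec f g) (npair x n) a ->
    eval g (npair (npair x n) a) b ->
    eval (crec f g) (npair x (S n)) b
| ev_min f x n :
    eval f (npair x n) 0 ->
    (forall m, m < n -> exists v, eval f (npair x m) (S v)) ->
    eval (cmin f) x n.

Fixpoint enc_list (l : list nat) : nat :=
  match l with [] => 0 | a :: l' => S (npair a (enc_list l')) end.

Definition prefix (p : nat -> nat) (k : nat) : list nat := map p (seq 0 k).

(* machine e computes output q on input p: for each n, reading some finite
   prefix of p it eventually answers q n (encoded as S (q n)); answer 0 means
   "not yet", and any non-zero answer is correct. *)
Definition computes (e : code) (p q : nat -> nat) : Prop :=
  forall n,
    (exists k, eval e (npair (enc_list (prefix p k)) n) (S (q n))) /\
    (forall k v, eval e (npair (enc_list (prefix p k)) n) (S v) -> v = q n).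

Record rspace : Type := RSpace {
  carrier :> Type;
  rep : (nat -> nat) -> carrier -> Prop
}.

Definition problem (X Y : rspace) := X -> Y -> Prop.

Definition sW_le (X Y X' Y' : rspace) (f : problem X Y) (g : problem X' Y') : Prop :=
  exists eH eK : code,
    forall G : (nat -> nat) -> (nat -> nat),
      (forall p' x', rep X' p' x' -> (exists y', g x' y') ->
         exists y', rep Y' (G p') y' /\ g x' y') ->
      forall p x, rep X p x -> (exists y, f x y) ->
        exists q r y, computes eK p q /\ computes eH (G q) r /\
                      rep Y r y /\ f x y.

Definition sW_equiv (X Y X' Y' : rspace) (f : problem X Y) (g : problem X' Y') : Prop :=
  sW_le f g /\ sW_le g f.

Definition Two : rspace :=
  @RSpace bool (fun p b => p 0 = (if b then 1 else 0)).

(* Baire space with input representation lim: p = <p_0,p_1,...>,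
   <p_0,p_1,...>(<i,j>) = p_i(j), converging to x *)
Definition Baire_lim : rspace :=
  @RSpace (nat -> nat)
    (fun p x => forall j, exists N, forall i, N <= i -> p (npair i j) = x j).

(* LPO(p) = 0 iff exists n, p(n) = 0 ; LPO' = LPO on Baire_lim *)
Definition LPO' : problem Baire_lim Two :=
  fun x b => b = false <-> exists n, x n = 0.

(* Cantor space points: nat -> bool. Standard enumeration of basic balls:
   ball n = cylinder of the word obtained from the binary expansion of n+1
   with the leading 1 removed. *)
Fixpoint word_of_pos (q : positive) : list bool :=
  match q with
  | xH => []
  | xO q' => word_of_pos q' ++ [false]
  | xI q' => word_of_pos q' ++ [true]
  end.

Definition word (n : nat) : list bool := word_of_pos (Pos.of_succ_nat n).

Definition in_cyl (w : list bool) (x : nat -> bool) : Prop :=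
  forall i, i < length w -> x i = nth i w false.

Definition in_ball (n : nat) (x : nat -> bool) : Prop := in_cyl (word n) x.

Definition ClosedCantor : rspace :=
  @RSpace ((nat -> bool) -> Prop)
    (fun p A => forall x, A x <-> ~ (exists n, in_ball (p n) x)).

(* mu(A) = 0 for the uniform measure: A is covered by cylinders of
   arbitrarily small total measure *)
Definition null_set (A : (nat -> bool) -> Prop) : Prop :=
  forall k : nat, exists s : nat -> list bool,
    (forall x, A x -> exists i, in_cyl (s i) x) /\
    (forall N, (sum_f_R0 (fun i => (/2)^(length (s i))) N <= (/2)^k)%R).

Definition NEG : problem ClosedCantor Two :=
  fun A b => b = true <-> null_set A.

From Stdlib Require Import Reals List Arith PArith Lia Lra Classical ClassicalEpsilon.
Import ListNotations.
Open Scope nat_scope.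
Open Scope bool_scope.

(* Both reductions only preprocess the input; the answer of the oracle is passed on unchanged.

   LPO' <= NEG: given approximations p_i -> x, remove from Cantor space the points starting with 0
   and, for each c = <n, N>, the cylinder [1 0^c 1] as soon as some p_i(n) with i >= N is non-zero.
   If x(n) = 0 then p_i(n) = 0 from some stage N on, the cylinder of <n, N> survives and the
   resulting closed set has positive measure; if x has no zero, every such cylinder is removed and
   only the point 1 0^omega is left.

   NEG <= LPO': given the balls covering the complement of A, let u_i be the number of words of
   length i not covered by the first i balls of length at most i. As u_(i+1) <= 2 u_i, the test
   u_i 2^k < 2^i is eventually constant in i, so x(k) = [exists i, u_i 2^k < 2^i] is a limit of
   computable approximations; by compactness of Cantor space, mu(A) = 0 iff x has no zero. *)

(** * Cantor pairing and the determinism of [eval] *)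

Definition tri (s : nat) : nat := s * (s + 1) / 2.

Lemma tri_S s : tri (S s) = tri s + S s.
Proof.
  unfold tri. replace (S s * (S s + 1)) with (s * (s + 1) + S s * 2) by ring.
  rewrite Nat.div_add by lia. reflexivity.
Qed.

Lemma tri_le a b : a <= b -> tri a <= tri b.
Proof. induction 1; [lia|]. rewrite tri_S. lia. Qed.

Lemma npairE x y : npair x y = tri (x + y) + y.
Proof. reflexivity. Qed.

Lemma npair_inj x y x' y' : npair x y = npair x' y' -> x = x' /\ y = y'.
Proof.
  rewrite !npairE. intros H.
  assert (Hs : x + y = x' + y').
  { destruct (Nat.lt_trichotomy (x + y) (x' + y')) as [h|[h|h]]; [|exact h|].
    - pose proof (tri_le _ _ h) as T. rewrite tri_S in T. lia.
    - pose proof (tri_le _ _ h) as T. rewrite tri_S in T. lia. }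
  rewrite Hs in H. lia.
Qed.

(* Walks the diagonals of the Cantor enumeration: (x, y) is followed by (x-1, y+1),
   and (0, y) by (y+1, 0). *)
Fixpoint unpair (m : nat) : nat * nat :=
  match m with
  | 0 => (0, 0)
  | S m' => let (x, y) := unpair m' in
            match x with 0 => (S y, 0) | S x' => (x', S y) end
  end.

Lemma npair_unpair m : npair (fst (unpair m)) (snd (unpair m)) = m.
Proof.
  induction m as [|m IH]; [reflexivity|].
  simpl. destruct (unpair m) as [[|x] y]; simpl in *; rewrite !npairE in *.
  - replace (S y + 0) with (S y) by lia. rewrite tri_S. simpl in IH. lia.
  - replace (x + S y) with (S x + y) by lia. lia.
Qed.

Lemma unpair_npair a b : unpair (npair a b) = (a, b).
Proof.
  pose proof (npair_unpair (npair a b)) as H.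
  apply npair_inj in H. destruct (unpair (npair a b)); simpl in *. f_equal; tauto.
Qed.

Ltac npair_injection :=
  repeat match goal with
  | H : npair _ _ = npair _ _ |- _ => apply npair_inj in H; destruct H; subst
  end.

Lemma eval_crec_functional f g :
  (forall x a b, eval f x a -> eval f x b -> a = b) ->
  (forall x a b, eval g x a -> eval g x b -> a = b) ->
  forall x a b, eval (crec f g) x a -> eval (crec f g) x b -> a = b.
Proof.
  intros Hf Hg x. rewrite <- (npair_unpair x).
  generalize (fst (unpair x)) as x0. generalize (snd (unpair x)) as n.
  induction n as [|n IH]; intros x0 a b Ha Hb;
    inversion Ha; subst; npair_injection; try lia;
    inversion Hb; subst; npair_injection; try lia; eauto.
  injection H0 as ->. injection H1 as ->.
  assert (a0 = a1) as -> by eauto. eauto.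
Qed.

Lemma eval_functional c x a b : eval c x a -> eval c x b -> a = b.
Proof.
  revert x a b.
  induction c; intros x a b Ha Hb;
    [ .. | exact (eval_crec_functional _ _ IHc1 IHc2 _ _ _ Ha Hb) | ];
    inversion Ha; subst; inversion Hb; subst; npair_injection; eauto.
  - assert (a0 = a1) as -> by eauto. eauto.
  - match goal with |- ?a = ?b =>
      destruct (Nat.lt_trichotomy a b) as [h|[h|h]]; [|exact h|] end.
    + destruct (H3 a h) as [v Hv]. specialize (IHc _ _ _ H0 Hv). discriminate.
    + destruct (H1 b h) as [v Hv]. specialize (IHc _ _ _ H2 Hv). discriminate.
Qed.

(** * Primitive recursive expressions and their compilation *)

(* Primitive recursive expressions with de Bruijn variables: in [ERec b s n] the step [s]
   sees the accumulator as variable 0 and the counter as variable 1. *)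
Inductive exp : Type :=
| EVar (k : nat) | EZero | ESucc (e : exp) | EFst (e : exp) | ESnd (e : exp)
| EPair (a b : exp) | ERec (b s n : exp).

Fixpoint den (e : exp) (env : list nat) : nat :=
  match e with
  | EVar k => nth k env 0
  | EZero => 0
  | ESucc e => S (den e env)
  | EFst e => fst (unpair (den e env))
  | ESnd e => snd (unpair (den e env))
  | EPair a b => npair (den a env) (den b env)
  | ERec b s n => nat_rect (fun _ => nat) (den b env)
                    (fun m acc => den s (acc :: m :: env)) (den n env)
  end.

Fixpoint shift (c d : nat) (e : exp) : exp :=
  match e with
  | EVar k => if k <? c then EVar k else EVar (k + d)
  | EZero => EZero
  | ESucc e => ESucc (shift c d e)
  | EFst e => EFst (shift c d e)
  | ESnd e => ESnd (shift c d e)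
  | EPair a b => EPair (shift c d a) (shift c d b)
  | ERec b s n => ERec (shift c d b) (shift (S (S c)) d s) (shift c d n)
  end.

Lemma den_shift e : forall c d env1 ins env2, length env1 = c -> length ins = d ->
  den (shift c d e) (env1 ++ ins ++ env2) = den e (env1 ++ env2).
Proof.
  induction e; intros c d env1 ins env2 Hc Hd; simpl; try (f_equal; eauto; fail).
  - destruct (Nat.ltb_spec k c); simpl.
    + rewrite !app_nth1 by lia. reflexivity.
    + rewrite !app_nth2 by lia. f_equal. lia.
  - rewrite IHe1, IHe3 by auto.
    induction (den e3 (env1 ++ env2)) as [|m IHm]; simpl; auto.
    rewrite IHm. subst c. apply (IHe2 _ _ (_ :: _ :: env1)); auto.
Qed.

Lemma den_shift1 e x env : den (shift 0 1 e) (x :: env) = den e env.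
Proof. apply (den_shift e 0 1 [] [x] env); auto. Qed.

Lemma den_shift2 e x y env : den (shift 0 2 e) (x :: y :: env) = den e env.
Proof. apply (den_shift e 0 2 [] [x; y] env); auto. Qed.

Fixpoint encenv (l : list nat) : nat :=
  match l with [] => 0 | v :: l' => npair v (encenv l') end.

Fixpoint cvar (k : nat) : code :=
  match k with 0 => cfst | S k' => ccomp (cvar k') csnd end.

Definition cpred : code := crec czero (ccomp csnd cfst).
Definition cid : code := ccomp cpred (cpr czero csucc).

(* [ERec b s n] becomes a [crec] on [<env, n>] whose step rebuilds the environment
   [acc :: m :: env] from [<<env, m>, acc>]. *)
Fixpoint compile (e : exp) : code :=
  match e with
  | EVar k => cvar k
  | EZero => czero
  | ESucc e => ccomp csucc (compile e)
  | EFst e => ccomp cfst (compile e)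
  | ESnd e => ccomp csnd (compile e)
  | EPair a b => cpr (compile a) (compile b)
  | ERec b s n => ccomp (crec (compile b)
        (ccomp (compile s) (cpr csnd (cpr (ccomp csnd cfst) (ccomp cfst cfst)))))
        (cpr cid (compile n))
  end.

Lemma eval_fst v : eval cfst v (fst (unpair v)).
Proof. rewrite <- (npair_unpair v) at 1. apply ev_fst. Qed.

Lemma eval_snd v : eval csnd v (snd (unpair v)).
Proof. rewrite <- (npair_unpair v) at 1. apply ev_snd. Qed.

Lemma eval_pred y n : eval cpred (npair y n) (pred n).
Proof.
  induction n.
  - apply ev_rec0. constructor.
  - eapply ev_recS; [apply IHn|]. eapply ev_comp; [apply ev_fst|apply ev_snd].
Qed.

Lemma eval_id x : eval cid x x.
Proof. eapply ev_comp; [apply ev_pr; constructor|]. apply (eval_pred 0 (S x)). Qed.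

Lemma eval_cvar k : forall env, eval (cvar k) (encenv env) (nth k env 0).
Proof.
  induction k as [|k IH]; intros [|v env]; simpl.
  - apply (eval_fst 0).
  - apply ev_fst.
  - eapply ev_comp; [apply (eval_snd 0)|]. destruct k; apply (IH []).
  - eapply ev_comp; [apply ev_snd|apply IH].
Qed.

Theorem compile_correct e : forall env, eval (compile e) (encenv env) (den e env).
Proof.
  induction e; intros env; simpl.
  - apply eval_cvar.
  - constructor.
  - eapply ev_comp; eauto. constructor.
  - eapply ev_comp; eauto. apply eval_fst.
  - eapply ev_comp; eauto. apply eval_snd.
  - constructor; auto.
  - eapply ev_comp; [apply ev_pr; [apply eval_id|apply IHe3]|].
    induction (den e3 env) as [|m IHm]; simpl.
    + apply ev_rec0. apply IHe1.
    + eapply ev_recS; [apply IHm|].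
      eapply ev_comp; [|apply (IHe2 (_ :: _ :: env))].
      apply ev_pr; [constructor|]. apply ev_pr; eapply ev_comp; constructor.
Qed.

(* The machine of an expression in the variables [L] (the code of a finite prefix of the input)
   and [n] (the queried position). *)
Definition machine (e : exp) : code := ccomp (compile e) (cpr cfst (cpr csnd czero)).

Lemma eval_machine e L n : eval (machine e) (npair L n) (den e [L; n]).
Proof.
  eapply ev_comp; [apply ev_pr; [constructor|apply ev_pr; constructor]|].
  apply (compile_correct e [L; n]).
Qed.

Lemma machine_computes e p q :
  (forall n, exists k, den e [enc_list (prefix p k); n] = S (q n)) ->
  (forall k n v, den e [enc_list (prefix p k); n] = S v -> v = q n) ->
  computes (machine e) p q.
Proof.
  intros Hex Hsound n. split.
  - destruct (Hex n) as [k Hk]. exists k. rewrite <- Hk. apply eval_machine.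
  - intros k v Hv. apply (Hsound k n v).
    eapply eval_functional; [apply eval_machine|exact Hv].
Qed.

Definition ind (b : bool) : nat := if b then 1 else 0.

Fixpoint sumto (f : nat -> nat) (n : nat) : nat :=
  match n with 0 => 0 | S n' => sumto f n' + f n' end.

Lemma sumto_ext f g n : (forall j, j < n -> f j = g j) -> sumto f n = sumto g n.
Proof. induction n; simpl; intros; auto. rewrite IHn, H; auto. Qed.

Definition list_tail (c : nat) : nat := snd (unpair (pred c)).
Definition list_head (c : nat) : nat := fst (unpair (pred c)).
Definition list_drop (L n : nat) : nat := Nat.iter n list_tail L.

Definition EPred e := ERec EZero (EVar 1) e.
Definition EAdd a b := ERec a (ESucc (EVar 0)) b.
Definition ESub a b := ERec a (EPred (EVar 0)) b.
Definition EMul a b := ERec EZero (EAdd (EVar 0) (shift 0 2 a)) b.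
Definition EPow2 e := ERec (ESucc EZero) (EAdd (EVar 0) (EVar 0)) e.
Fixpoint EConst n := match n with 0 => EZero | S n => ESucc (EConst n) end.
Definition EIsZero a := ESub (EConst 1) a.
Definition ENonZero a := EIsZero (EIsZero a).
Definition ELe a b := EIsZero (ESub a b).
Definition ELt a b := ELe (ESucc a) b.
Definition ECond c a b := ERec b (shift 0 2 a) c.
Definition ESum body n := ERec EZero (EAdd (EVar 0) (shift 0 1 body)) n.
Definition ECase T body := ERec EZero (shift 0 1 body) T.
Definition EDrop L n := ERec L (ESnd (EPred (EVar 0))) n.
Definition EHead e := EFst (EPred e).

Lemma den_EPred e env : den (EPred e) env = pred (den e env).
Proof. simpl. destruct (den e env); reflexivity. Qed.

Lemma den_EAdd a b env : den (EAdd a b) env = den a env + den b env.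
Proof. simpl. induction (den b env); simpl; lia. Qed.

Lemma den_ESub a b env : den (ESub a b) env = den a env - den b env.
Proof.
  cbn [den ESub]. induction (den b env) as [|m IH]; cbn [nat_rect]; [lia|].
  rewrite den_EPred. cbn [den nth]. rewrite IH. lia.
Qed.

Lemma den_EMul a b env : den (EMul a b) env = den a env * den b env.
Proof.
  cbn [den EMul]. induction (den b env) as [|m IH]; cbn [nat_rect]; [lia|].
  rewrite den_EAdd. cbn [den nth]. rewrite den_shift2, IH. lia.
Qed.

Lemma den_EPow2 e env : den (EPow2 e) env = 2 ^ den e env.
Proof.
  cbn [den EPow2]. induction (den e env) as [|m IH]; cbn [nat_rect]; [reflexivity|].
  rewrite den_EAdd. cbn [den nth]. rewrite IH, Nat.pow_succ_r'. lia.
Qed.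

Lemma den_EConst n env : den (EConst n) env = n.
Proof. induction n; simpl; auto. Qed.

Lemma den_EIsZero a env : den (EIsZero a) env = ind (den a env =? 0).
Proof. unfold EIsZero. rewrite den_ESub, den_EConst. destruct (den a env); reflexivity. Qed.

Lemma den_ENonZero a env : den (ENonZero a) env = ind (negb (den a env =? 0)).
Proof. unfold ENonZero. rewrite !den_EIsZero. destruct (den a env); reflexivity. Qed.

Lemma den_ELe a b env : den (ELe a b) env = ind (den a env <=? den b env).
Proof.
  unfold ELe. rewrite den_EIsZero, den_ESub.
  destruct (Nat.leb_spec (den a env) (den b env)), (Nat.eqb_spec (den a env - den b env) 0);
    simpl; lia.
Qed.

Lemma den_ELt a b env : den (ELt a b) env = ind (den a env <? den b env).
Proof. unfold ELt. rewrite den_ELe. reflexivity. Qed.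

Lemma den_ECond c a b env :
  den (ECond c a b) env = if den c env =? 0 then den b env else den a env.
Proof. simpl. destruct (den c env); simpl; [reflexivity|]. apply den_shift2. Qed.

Lemma den_ESum body n env :
  den (ESum body n) env = sumto (fun j => den body (j :: env)) (den n env).
Proof.
  cbn [den ESum]. induction (den n env) as [|m IH]; cbn [nat_rect]; [reflexivity|].
  rewrite den_EAdd. cbn [den nth]. rewrite den_shift1, IH. reflexivity.
Qed.

Lemma den_ECase T body env :
  den (ECase T body) env = match den T env with 0 => 0 | S v => den body (v :: env) end.
Proof. simpl. destruct (den T env); simpl; [reflexivity|]. apply den_shift1. Qed.

Lemma den_EDrop L n env : den (EDrop L n) env = list_drop (den L env) (den n env).
Proof.
  cbn [den EDrop]. induction (den n env) as [|m IH]; cbn [nat_rect]; [reflexivity|].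
  rewrite den_EPred. cbn [den nth]. rewrite IH. reflexivity.
Qed.

Lemma den_EHead e env : den (EHead e) env = list_head (den e env).
Proof. cbn [den EHead]. rewrite den_EPred. reflexivity. Qed.

Global Opaque EPred EAdd ESub EMul EPow2 EConst EIsZero ENonZero ELe ELt ECond ESum ECase
  EDrop EHead.

Lemma list_drop_enc p a len n :
  list_drop (enc_list (map p (seq a len))) n = enc_list (map p (seq (a + n) (len - n))).
Proof.
  induction n as [|n IH]; simpl.
  - rewrite Nat.add_0_r, Nat.sub_0_r. reflexivity.
  - unfold list_drop in *. simpl. rewrite IH.
    destruct (len - n) as [|m] eqn:E.
    + replace (len - S n) with 0 by lia. reflexivity.
    + simpl. unfold list_tail. simpl. rewrite unpair_npair. simpl.
      replace (len - S n) with m by lia. do 3 f_equal. lia.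
Qed.

Lemma list_drop_prefix_lt p k n : n < k ->
  exists R, list_drop (enc_list (prefix p k)) n = S (npair (p n) R).
Proof.
  intros H. unfold prefix. rewrite list_drop_enc. simpl.
  replace (k - n) with (S (k - S n)) by lia. simpl. eauto.
Qed.

Lemma list_drop_prefix_ge p k n : k <= n -> list_drop (enc_list (prefix p k)) n = 0.
Proof.
  intros H. unfold prefix. rewrite list_drop_enc. replace (k - n) with 0 by lia. reflexivity.
Qed.

Lemma list_head_drop_prefix p k n : n < k -> list_head (list_drop (enc_list (prefix p k)) n) = p n.
Proof.
  intros H. destruct (list_drop_prefix_lt p k n H) as [R ->].
  unfold list_head. simpl. rewrite unpair_npair. reflexivity.
Qed.

(* A machine that answers query [m] once it has read the input up to position [I m]. *)
Lemma lookup_machine_computes (idx body : exp) (I : nat -> nat) p q :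
  (forall L m, den idx [L; m] = I m) ->
  (forall k m R, I m < k -> den body [npair (p (I m)) R; enc_list (prefix p k); m] = q m) ->
  computes (machine (ECase (EDrop (EVar 0) idx) (ESucc body))) p q.
Proof.
  intros Hidx Hbody. apply machine_computes.
  - intros m. exists (S (I m)). rewrite den_ECase, den_EDrop, Hidx. cbn [den nth].
    destruct (list_drop_prefix_lt p (S (I m)) (I m) ltac:(lia)) as [R ->].
    cbn [den]. rewrite Hbody by lia. reflexivity.
  - intros k m v. rewrite den_ECase, den_EDrop, Hidx. cbn [den nth].
    destruct (Nat.lt_ge_cases (I m) k) as [Hk|Hk].
    + destruct (list_drop_prefix_lt p k (I m) Hk) as [R ->].
      cbn [den]. rewrite Hbody by exact Hk. congruence.
    + rewrite list_drop_prefix_ge by exact Hk. discriminate.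
Qed.

Lemma identity_computes p :
  computes (machine (ECase (EDrop (EVar 0) (EVar 1)) (ESucc (EFst (EVar 0))))) p p.
Proof.
  apply (lookup_machine_computes _ _ (fun m => m)); [reflexivity|].
  intros k m R _. cbn [den nth]. rewrite unpair_npair. reflexivity.
Qed.

Lemma sW_le_of_computable_preprocessing (X X' Y : rspace) (f : problem X Y) (g : problem X' Y)
    (eK : code) (K : (nat -> nat) -> nat -> nat) :
  (forall p, computes eK p (K p)) ->
  (forall p x, rep X p x -> exists x',
     rep X' (K p) x' /\ (exists y, g x' y) /\ forall y, g x' y -> f x y) ->
  sW_le f g.
Proof.
  intros HK Hred. eexists _, eK. intros G HG p x Hp _.
  destruct (Hred p x Hp) as [x' [Hx' [Hdom Hgf]]].
  destruct (HG (K p) x' Hx' Hdom) as [y [Hy Hg]].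
  exists (K p), (G (K p)), y. auto using identity_computes.
Qed.

(* [bin_acc a w] appends the bits of [w] to the binary number [a]; [bin w] is the number with
   binary expansion [1w], so that [bin (word n) = S n]. *)
Fixpoint bin_acc (a : nat) (w : list bool) : nat :=
  match w with [] => a | b :: w' => bin_acc (2 * a + ind b) w' end.

Definition bin (w : list bool) : nat := bin_acc 1 w.

Lemma bin_acc_app a u r : bin_acc a (u ++ r) = bin_acc (bin_acc a u) r.
Proof. revert a; induction u; simpl; auto. Qed.

Lemma bin_acc_shift a r : bin_acc a r = a * 2 ^ length r + bin_acc 0 r.
Proof.
  revert a; induction r as [|b r IH]; intros a; cbn [bin_acc length]; [simpl; lia|].
  rewrite (IH (2 * a + ind b)), (IH (2 * 0 + ind b)), Nat.pow_succ_r'. lia.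
Qed.

Lemma bin_acc0_lt r : bin_acc 0 r < 2 ^ length r.
Proof.
  induction r as [|b r IH]; cbn [bin_acc length]; [simpl; lia|].
  rewrite bin_acc_shift, Nat.pow_succ_r'. destruct b; cbn [ind]; lia.
Qed.

Lemma bin_range w : 2 ^ length w <= bin w < 2 ^ S (length w).
Proof. unfold bin. rewrite bin_acc_shift, Nat.pow_succ_r'. pose proof (bin_acc0_lt w). lia. Qed.

Lemma bin_snoc w b : bin (w ++ [b]) = 2 * bin w + ind b.
Proof. unfold bin. rewrite bin_acc_app. reflexivity. Qed.

Lemma bin_word_of_pos P : bin (word_of_pos P) = Pos.to_nat P.
Proof.
  induction P; simpl; [rewrite bin_snoc, IHP, Pos2Nat.inj_xI|
    rewrite bin_snoc, IHP, Pos2Nat.inj_xO|reflexivity]; simpl; lia.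
Qed.

Lemma bin_word n : bin (word n) = S n.
Proof. unfold word. rewrite bin_word_of_pos. apply SuccNat2Pos.id_succ. Qed.

Lemma length_of_bin_range w i : 2 ^ i <= bin w < 2 ^ S i -> length w = i.
Proof.
  intros H. pose proof (bin_range w).
  assert (length w < S i) by (apply (Nat.pow_lt_mono_r_iff 2); lia).
  assert (i < S (length w)) by (apply (Nat.pow_lt_mono_r_iff 2); lia).
  lia.
Qed.

Lemma bin_inj_length n : forall u w, length u = n -> length w = n -> bin u = bin w -> u = w.
Proof.
  induction n as [|n IH]; intros u w Hu Hw H.
  - destruct u, w; simpl in *; auto; discriminate.
  - destruct (exists_last (l := u)) as [u' [b ->]]; [intros ->; discriminate|].
    destruct (exists_last (l := w)) as [w' [c ->]]; [intros ->; discriminate|].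
    rewrite !bin_snoc in H. rewrite !length_app in *. simpl in *.
    assert (b = c) as -> by (destruct b, c; simpl in H; auto; lia).
    f_equal. apply IH; lia.
Qed.

Lemma bin_inj u w : bin u = bin w -> u = w.
Proof.
  intros H. apply (bin_inj_length (length u)); auto.
  apply length_of_bin_range. rewrite <- H. apply bin_range.
Qed.

Lemma word_of_bin n w : bin w = S n -> word n = w.
Proof. intros H. apply bin_inj. rewrite bin_word. auto. Qed.

Lemma in_cyl_iff_prefix u z : in_cyl u z <-> map z (seq 0 (length u)) = u.
Proof.
  split.
  - intros H. apply nth_ext with (d := false) (d' := false).
    + rewrite length_map, length_seq. reflexivity.
    + intros n Hn. rewrite length_map, length_seq in Hn.
      rewrite nth_indep with (d' := z 0) by (rewrite length_map, length_seq; auto).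
      rewrite map_nth, seq_nth by auto. apply H. exact Hn.
  - intros H i Hi. rewrite <- H.
    rewrite nth_indep with (d' := z 0) by (rewrite length_map, length_seq; auto).
    rewrite map_nth, seq_nth by auto. reflexivity.
Qed.

Lemma in_cyl_snoc v b z : in_cyl (v ++ [b]) z <-> in_cyl v z /\ z (length v) = b.
Proof.
  rewrite !in_cyl_iff_prefix, length_app, Nat.add_1_r, seq_S, map_app. simpl.
  split; [intros H; apply app_inj_tail in H; tauto|intros [-> ->]; reflexivity].
Qed.

Lemma in_cyl_agree u z z' :
  (forall t, t < length u -> z t = z' t) -> in_cyl u z -> in_cyl u z'.
Proof. intros H Hz i Hi. rewrite <- H; auto. Qed.

Definition bin_prefix (z : nat -> bool) (i : nat) : nat := bin (map z (seq 0 i)).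

Lemma bin_prefix_range z i : 2 ^ i <= bin_prefix z i < 2 ^ S i.
Proof.
  unfold bin_prefix. pose proof (bin_range (map z (seq 0 i))) as H.
  rewrite length_map, length_seq in H. exact H.
Qed.

Lemma bin_prefix_split z l i : l <= i ->
  exists r, r < 2 ^ (i - l) /\ bin_prefix z i = bin_prefix z l * 2 ^ (i - l) + r.
Proof.
  intros H. exists (bin_acc 0 (map z (seq l (i - l)))). split.
  - pose proof (bin_acc0_lt (map z (seq l (i - l)))) as Hr.
    rewrite length_map, length_seq in Hr. exact Hr.
  - unfold bin_prefix, bin. replace i with (l + (i - l)) at 1 by lia.
    rewrite seq_app, map_app, bin_acc_app, bin_acc_shift, length_map, length_seq.
    reflexivity.
Qed.

Lemma mul_add_bounds_iff A E P r : 0 < P -> r < P ->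
  (E * P <= A * P + r < S E * P <-> A = E).
Proof.
  intros HP Hr. split; [|intros ->; simpl; lia]. intros [H1 H2].
  destruct (Nat.lt_trichotomy A E) as [h|[h|h]]; [|exact h|].
  - assert (S A * P <= E * P) by (apply Nat.mul_le_mono_r; lia). simpl in *. lia.
  - assert (S E * P <= A * P) by (apply Nat.mul_le_mono_r; lia). simpl in *. lia.
Qed.

Lemma in_cyl_iff_bin_prefix u z i : length u <= i ->
  (in_cyl u z <->
   bin u * 2 ^ (i - length u) <= bin_prefix z i < S (bin u) * 2 ^ (i - length u)).
Proof.
  intros H. destruct (bin_prefix_split z (length u) i H) as [r [Hr ->]].
  rewrite mul_add_bounds_iff by (pose proof (Nat.pow_nonzero 2 (i - length u)); lia).
  rewrite in_cyl_iff_prefix. unfold bin_prefix.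
  split; [intros ->; reflexivity|apply bin_inj].
Qed.

(* For [2^i <= X < 2^(i+1)], the point whose length-[i] prefix has [bin] value [X]. *)
Definition point_of (X : nat) : nat -> bool := fun t => nth t (word (X - 1)) false.

Lemma map_nth_seq (w : list bool) : map (fun t => nth t w false) (seq 0 (length w)) = w.
Proof. apply in_cyl_iff_prefix. intros i _. reflexivity. Qed.

Lemma bin_prefix_point_of X i : 2 ^ i <= X < 2 ^ S i -> bin_prefix (point_of X) i = X.
Proof.
  intros H. assert (E : bin (word (X - 1)) = X).
  { rewrite bin_word. pose proof (Nat.pow_nonzero 2 i). lia. }
  assert (L : length (word (X - 1)) = i) by (apply length_of_bin_range; rewrite E; exact H).
  unfold bin_prefix, point_of. rewrite <- L, map_nth_seq. exact E.
Qed.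

(** * Compactness of Cantor space *)

(* König's lemma: a path of cylinders none of which is finitely covered converges to a point
   outside every cylinder of the cover. *)
Section Compactness.
Variable F : nat -> list bool.

Definition finitely_uncovered (v : list bool) : Prop :=
  forall J, exists z, in_cyl v z /\ forall l, l < J -> ~ in_cyl (F l) z.

Lemma finitely_uncovered_extend v :
  finitely_uncovered v -> exists b, finitely_uncovered (v ++ [b]).
Proof.
  intros H. apply NNPP. intros C.
  assert (H0 : ~ finitely_uncovered (v ++ [false])) by eauto.
  assert (H1 : ~ finitely_uncovered (v ++ [true])) by eauto.
  apply not_all_ex_not in H0 as [J0 H0]. apply not_all_ex_not in H1 as [J1 H1].
  destruct (H (J0 + J1)) as [z [Hz Hl]].
  destruct (z (length v)) eqn:E; [apply H1|apply H0]; exists z;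
    (split; [apply in_cyl_snoc; auto|intros l Hl' Hc; apply (Hl l); auto; lia]).
Qed.

Lemma extension_choice v : exists b, finitely_uncovered v -> finitely_uncovered (v ++ [b]).
Proof.
  destruct (classic (finitely_uncovered v)) as [H|H].
  - destruct (finitely_uncovered_extend v H) as [b Hb]. eauto.
  - exists false. tauto.
Qed.

Definition extend (v : list bool) : list bool :=
  v ++ [proj1_sig (constructive_indefinite_description _ (extension_choice v))].

Lemma extend_finitely_uncovered v : finitely_uncovered v -> finitely_uncovered (extend v).
Proof. unfold extend. destruct (constructive_indefinite_description _ _). auto. Qed.

Lemma extend_prefix v : exists b, extend v = v ++ [b].
Proof. eexists. reflexivity. Qed.

Definition extensions (w : list bool) (n : nat) : list bool := Nat.iter n extend w.

Lemma extensions_length w n : length (extensions w n) = length w + n.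
Proof.
  induction n as [|n IH]; simpl; [lia|].
  destruct (extend_prefix (extensions w n)) as [b ->]. rewrite length_app, IH. simpl. lia.
Qed.

Lemma extensions_prefix w n m : n <= m -> exists r, extensions w m = extensions w n ++ r.
Proof.
  induction 1 as [|m _ [r Hr]]; [exists []; rewrite app_nil_r; reflexivity|].
  simpl. destruct (extend_prefix (extensions w m)) as [b ->].
  exists (r ++ [b]). rewrite Hr, app_assoc. reflexivity.
Qed.

Lemma extensions_finitely_uncovered w n :
  finitely_uncovered w -> finitely_uncovered (extensions w n).
Proof. intros H. induction n; simpl; auto using extend_finitely_uncovered. Qed.

Lemma cyl_finite_subcover w : (forall z, in_cyl w z -> exists l, in_cyl (F l) z) ->
  exists J, forall z, in_cyl w z -> exists l, l < J /\ in_cyl (F l) z.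
Proof.
  intros Hcov. apply NNPP. intros C.
  assert (Hw : finitely_uncovered w).
  { intros J. apply NNPP. intros C2. apply C. exists J. intros z Hz.
    apply NNPP. intros C3. apply C2. exists z. split; [exact Hz|].
    intros l Hl Hc. apply C3. eauto. }
  set (z := fun t => nth t (extensions w (S t)) false).
  assert (Hz : forall n, in_cyl (extensions w n) z).
  { intros n i Hi. unfold z.
    destruct (Nat.le_gt_cases (S i) n) as [h|h].
    - destruct (extensions_prefix w (S i) n h) as [r ->].
      rewrite app_nth1; [reflexivity|]. rewrite extensions_length. lia.
    - destruct (extensions_prefix w n (S i) ltac:(lia)) as [r ->].
      rewrite app_nth1; auto. }
  destruct (Hcov z (Hz 0)) as [l Hl].
  destruct (extensions_finitely_uncovered w (length (F l)) Hw (S l)) as [z' [Hz' Hn]].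
  apply (Hn l); [lia|]. apply (in_cyl_agree (F l) z z'); [|exact Hl].
  intros t Ht. specialize (Hz (length (F l)) t). specialize (Hz' t).
  rewrite extensions_length in Hz, Hz'. rewrite Hz, Hz' by lia. reflexivity.
Qed.
End Compactness.

Lemma sumto_le f g n : (forall j, j < n -> f j <= g j) -> sumto f n <= sumto g n.
Proof.
  induction n as [|n IH]; simpl; intros H; [lia|].
  specialize (IH ltac:(auto)). specialize (H n). lia.
Qed.

Lemma sumto_le_index f a b : a <= b -> sumto f a <= sumto f b.
Proof. induction 1; simpl; lia. Qed.

Lemma sumto_add f g n : sumto (fun j => f j + g j) n = sumto f n + sumto g n.
Proof. induction n; simpl; lia. Qed.

Lemma sumto_swap (f : nat -> nat -> nat) n m :
  sumto (fun i => sumto (fun j => f i j) m) n = sumto (fun j => sumto (fun i => f i j) n) m.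
Proof.
  induction n as [|n IH]; simpl.
  - induction m; simpl; lia.
  - rewrite IH, <- sumto_add. reflexivity.
Qed.

Lemma sumto_mull c f n : c * sumto f n = sumto (fun j => c * f j) n.
Proof. induction n; simpl; lia. Qed.

Lemma le_sumto f n l : l < n -> f l <= sumto f n.
Proof.
  induction n as [|n IH]; simpl; intros H; [lia|].
  destruct (Nat.eq_dec l n) as [->|]; [lia|]. specialize (IH ltac:(lia)). lia.
Qed.

Lemma sumto_eq0 f n : sumto f n = 0 <-> forall j, j < n -> f j = 0.
Proof.
  induction n as [|n IH]; simpl; [split; intros; auto; lia|].
  split.
  - intros H j Hj. destruct (Nat.eq_dec j n) as [->|]; [lia|]. apply IH; lia.
  - intros H. rewrite (proj2 IH), H by auto. reflexivity.
Qed.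

Lemma sumto_min f M n : sumto (fun m => if m <? M then f m else 0) n = sumto f (Nat.min n M).
Proof.
  induction n as [|n IH]; [reflexivity|]. cbn [sumto]. rewrite IH.
  destruct (Nat.ltb_spec n M).
  - replace (Nat.min (S n) M) with (S n) by lia. replace (Nat.min n M) with n by lia. reflexivity.
  - replace (Nat.min (S n) M) with (Nat.min n M) by lia. lia.
Qed.

Lemma count_interval a b M : a <= b ->
  sumto (fun j => ind ((a <=? j) && (j <? b))) M = Nat.min M b - Nat.min M a.
Proof.
  intros Hab. induction M as [|M IH]; cbn [sumto]; [lia|].
  rewrite IH. destruct (Nat.leb_spec a M), (Nat.ltb_spec M b); cbn [andb ind]; lia.
Qed.

Lemma union_bound (g h : nat -> bool) (C : nat -> nat -> bool) M J :
  (forall j, j < M -> g j = true -> exists l, l < J /\ h l = true /\ C l j = true) ->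
  sumto (fun j => ind (g j)) M <= sumto (fun l => ind (h l) * sumto (fun j => ind (C l j)) M) J.
Proof.
  intros H.
  transitivity (sumto (fun j => sumto (fun l => ind (h l) * ind (C l j)) J) M).
  - apply sumto_le. intros j Hj. destruct (g j) eqn:E; simpl; [|lia].
    destruct (H j Hj E) as [l [Hl [Hh HC]]].
    pose proof (le_sumto (fun l => ind (h l) * ind (C l j)) J l Hl) as Hle.
    simpl in Hle. rewrite Hh, HC in Hle. simpl in Hle. lia.
  - rewrite <- sumto_swap. apply Nat.eq_le_incl. apply sumto_ext. intros l _.
    rewrite sumto_mull. reflexivity.
Qed.

(* Whether the [j]-th word of length [i] in lexicographic order (the one with [bin] value
   [2^i + j]) extends [u]. *)
Definition extendsb (u : list bool) (i j : nat) : bool :=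
  (bin u * 2 ^ (i - length u) <=? 2 ^ i + j) && (2 ^ i + j <? S (bin u) * 2 ^ (i - length u)).

Lemma extendsb_point_of u i j : length u <= i -> j < 2 ^ i ->
  extendsb u i j = true <-> in_cyl u (point_of (2 ^ i + j)).
Proof.
  intros H Hj. unfold extendsb.
  rewrite Bool.andb_true_iff, Nat.leb_le, Nat.ltb_lt, (in_cyl_iff_bin_prefix u _ i H).
  rewrite bin_prefix_point_of; [tauto|]. rewrite Nat.pow_succ_r'. lia.
Qed.

Lemma count_extendsb u i : length u <= i ->
  sumto (fun j => ind (extendsb u i j)) (2 ^ i) = 2 ^ (i - length u).
Proof.
  intros H. unfold extendsb. set (d := i - length u).
  pose proof (bin_range u) as Hu.
  assert (Hi : 2 ^ i = 2 ^ length u * 2 ^ d) by (rewrite <- Nat.pow_add_r; f_equal; lia).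
  assert (H1 : 2 ^ i <= bin u * 2 ^ d) by (rewrite Hi; apply Nat.mul_le_mono_r; lia).
  assert (H2 : S (bin u) * 2 ^ d <= 2 * 2 ^ i).
  { rewrite Hi, Nat.mul_assoc. apply Nat.mul_le_mono_r. rewrite Nat.pow_succ_r' in Hu. lia. }
  rewrite (sumto_ext _ (fun j => ind ((bin u * 2 ^ d - 2 ^ i <=? j) &&
                                      (j <? S (bin u) * 2 ^ d - 2 ^ i)))).
  - rewrite count_interval by (simpl in *; lia). simpl in *. lia.
  - intros j _. f_equal.
    destruct (Nat.leb_spec (bin u * 2 ^ d) (2 ^ i + j)),
      (Nat.leb_spec (bin u * 2 ^ d - 2 ^ i) j),
      (Nat.ltb_spec (2 ^ i + j) (S (bin u) * 2 ^ d)),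
      (Nat.ltb_spec j (S (bin u) * 2 ^ d - 2 ^ i)); simpl in *; lia.
Qed.

Lemma cyl_cover_count w s J i : length w <= i -> (forall l, l < J -> length (s l) <= i) ->
  (forall z, in_cyl w z -> exists l, l < J /\ in_cyl (s l) z) ->
  2 ^ (i - length w) <= sumto (fun l => 2 ^ (i - length (s l))) J.
Proof.
  intros Hw Hs Hcov.
  pose proof (union_bound (extendsb w i) (fun _ => true) (fun l => extendsb (s l) i) (2 ^ i) J)
    as H.
  cbv beta in H. rewrite (count_extendsb w i Hw) in H.
  rewrite (sumto_ext _ (fun l => 2 ^ (i - length (s l)))) in H.
  - apply H. intros j Hj Hg. apply extendsb_point_of in Hg; auto.
    destruct (Hcov _ Hg) as [l [Hl Hc]]. exists l. repeat split; auto.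
    apply extendsb_point_of; auto.
  - intros l Hl. simpl. rewrite Nat.add_0_r. apply count_extendsb; auto.
Qed.

Fixpoint rsum (f : nat -> R) (n : nat) : R :=
  match n with 0 => 0%R | S n' => (rsum f n' + f n')%R end.

Lemma sum_f_R0_rsum f N : sum_f_R0 f N = rsum f (S N).
Proof. induction N as [|N IH]; simpl; [lra|]. rewrite IH. reflexivity. Qed.

Lemma INR_sumto f n : INR (sumto f n) = rsum (fun j => INR (f j)) n.
Proof. induction n as [|n IH]; simpl; [reflexivity|]. rewrite plus_INR, IH. reflexivity. Qed.

Lemma rsum_ext f g n : (forall j, j < n -> f j = g j) -> rsum f n = rsum g n.
Proof. induction n as [|n IH]; simpl; intros H; [reflexivity|]. rewrite IH, H; auto. Qed.

Lemma rsum_mulr f c n : rsum (fun j => (f j * c)%R) n = (rsum f n * c)%R.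
Proof. induction n as [|n IH]; simpl; [lra|]. rewrite IH. lra. Qed.

Lemma half_pow_pos n : (0 < (/ 2) ^ n)%R.
Proof. apply pow_lt. lra. Qed.

Lemma INR_pow2_half_pow l i : l <= i -> (INR (2 ^ (i - l)) * (/ 2) ^ i)%R = ((/ 2) ^ l)%R.
Proof.
  intros H. rewrite pow_INR. replace (INR 2) with 2%R by (simpl; lra).
  replace i with (l + (i - l)) at 2 by lia.
  rewrite pow_add, <- Rmult_assoc, (Rmult_comm (2 ^ (i - l))), Rmult_assoc,
    <- Rpow_mult_distr.
  replace (2 * / 2)%R with 1%R by field. rewrite pow1. lra.
Qed.

Lemma INR_mul_half_pow_le a b c : (INR a * (/ 2) ^ b <= (/ 2) ^ c)%R <-> a * 2 ^ c <= 2 ^ b.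
Proof.
  assert (E : INR (a * 2 ^ c) = (INR a * 2 ^ c)%R /\ INR (2 ^ b) = (2 ^ b)%R).
  { rewrite mult_INR, !pow_INR. replace (INR 2) with 2%R by (simpl; lra). auto. }
  assert (Pb : (0 < 2 ^ b)%R) by (apply pow_lt; lra).
  assert (Pc : (0 < 2 ^ c)%R) by (apply pow_lt; lra).
  rewrite !pow_inv. split; intros H.
  - apply INR_le. rewrite (proj1 E), (proj2 E).
    apply (Rmult_le_compat_r (2 ^ b * 2 ^ c)) in H; [|nra].
    replace (INR a * / 2 ^ b * (2 ^ b * 2 ^ c))%R with (INR a * 2 ^ c)%R in H by (field; lra).
    replace (/ 2 ^ c * (2 ^ b * 2 ^ c))%R with (2 ^ b)%R in H by (field; lra). exact H.
  - apply le_INR in H. rewrite (proj1 E), (proj2 E) in H.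
    apply (Rmult_le_compat_r (/ 2 ^ b * / 2 ^ c)) in H.
    2:{ left. apply Rmult_lt_0_compat; apply Rinv_0_lt_compat; auto. }
    replace (INR a * 2 ^ c * (/ 2 ^ b * / 2 ^ c))%R with (INR a * / 2 ^ b)%R in H by (field; lra).
    replace (2 ^ b * (/ 2 ^ b * / 2 ^ c))%R with (/ 2 ^ c)%R in H by (field; lra). exact H.
Qed.

Lemma sum_half_pow_le a N : (sum_f_R0 (fun j => ((/ 2) ^ (S (a + j)))%R) N <= (/ 2) ^ a)%R.
Proof.
  assert (E : sum_f_R0 (fun j => ((/ 2) ^ (S (a + j)))%R) N
              = ((/ 2) ^ a - (/ 2) ^ (S (a + N)))%R).
  { induction N as [|N IH]; [simpl; rewrite Nat.add_0_r; lra|].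
    rewrite tech5, IH. replace (a + S N) with (S (a + N)) by lia. simpl. lra. }
  rewrite E. pose proof (half_pow_pos (S (a + N))). lra.
Qed.

Definition weight (s : nat -> list bool) (J : nat) : R :=
  rsum (fun l => ((/ 2) ^ length (s l))%R) J.

Lemma weight_bound (s : nat -> list bool) k :
  (forall N, (sum_f_R0 (fun l => (/ 2) ^ length (s l)) N <= (/ 2) ^ k)%R) ->
  forall J, (weight s J <= (/ 2) ^ k)%R.
Proof.
  intros H [|J]; [simpl; left; apply half_pow_pos|].
  unfold weight. rewrite <- sum_f_R0_rsum. apply H.
Qed.

Lemma weight_level (s : nat -> list bool) J i : (forall l, l < J -> length (s l) <= i) ->
  (INR (sumto (fun l => 2 ^ (i - length (s l)))%nat J) * (/ 2) ^ i)%R = weight s J.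
Proof.
  intros H. rewrite INR_sumto, <- rsum_mulr. apply rsum_ext.
  intros l Hl. apply INR_pow2_half_pow; auto.
Qed.

Lemma cyl_cover_weight w s J : (forall z, in_cyl w z -> exists l, l < J /\ in_cyl (s l) z) ->
  ((/ 2) ^ length w <= weight s J)%R.
Proof.
  intros Hcov. set (i := length w + sumto (fun l => length (s l)) J).
  assert (Hs : forall l, l < J -> length (s l) <= i).
  { intros l Hl. pose proof (le_sumto (fun l => length (s l)) J l Hl). unfold i. lia. }
  pose proof (cyl_cover_count w s J i ltac:(unfold i; lia) Hs Hcov) as H.
  apply le_INR, (Rmult_le_compat_r ((/ 2) ^ i)) in H; [|left; apply half_pow_pos].
  rewrite INR_pow2_half_pow, weight_level in H by (unfold i; lia || auto). exact H.
Qed.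

Lemma not_null_of_cyl_subset w (A : (nat -> bool) -> Prop) :
  (forall z, in_cyl w z -> A z) -> ~ null_set A.
Proof.
  intros Hsub Hnull.
  destruct (Hnull (S (length w))) as [s [Hcov Hsum]].
  destruct (cyl_finite_subcover s w) as [J HJ]; [intros z Hz; apply Hcov, Hsub, Hz|].
  pose proof (cyl_cover_weight w s J HJ) as Hlow.
  pose proof (weight_bound s _ Hsum J) as Hup.
  pose proof (half_pow_pos (length w)). simpl in Hup. lra.
Qed.

Lemma null_of_subset_point (A : (nat -> bool) -> Prop) z0 :
  (forall z, A z -> forall t, z t = z0 t) -> null_set A.
Proof.
  intros Hpt k. exists (fun j => map z0 (seq 0 (S (k + j)))). split.
  - intros z Hz. exists 0. apply in_cyl_iff_prefix. rewrite length_map, length_seq.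
    apply map_ext. intros t. apply Hpt, Hz.
  - intros N. rewrite (sum_eq _ (fun j => ((/ 2) ^ (S (k + j)))%R)).
    + apply sum_half_pow_le.
    + intros j _. rewrite length_map, length_seq. reflexivity.
Qed.

(** * LPO' reduces to NEG *)

Definition closed_of (q : nat -> nat) : (nat -> bool) -> Prop :=
  fun z => ~ exists m, in_ball (q m) z.

(* The cylinder [1 0^c 1]; these are pairwise disjoint and all miss the point [1 0^omega]. *)
Definition marker (c : nat) : list bool := true :: repeat false c ++ [true].

Lemma word_marker c : word (3 * 2 ^ S c) = marker c.
Proof.
  apply word_of_bin. unfold marker, bin. cbn [bin_acc].
  rewrite bin_acc_app, (bin_acc_shift _ (repeat false c)), repeat_length.
  replace (bin_acc 0 (repeat false c)) with 0 by (induction c; auto).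
  cbn [bin_acc ind]. rewrite Nat.pow_succ_r'. lia.
Qed.

Lemma in_ball_1 z : in_ball 1 z <-> z 0 = false.
Proof.
  unfold in_ball. replace (word 1) with [false] by (symmetry; apply word_of_bin; reflexivity).
  split; [intros H; apply (H 0); simpl; lia|].
  intros H [|i] Hi; [exact H|simpl in Hi; lia].
Qed.

Lemma in_cyl_marker c z : in_cyl (marker c) z <->
  z 0 = true /\ (forall t, 1 <= t <= c -> z t = false) /\ z (S c) = true.
Proof.
  assert (Hlen : length (marker c) = S (S c))
    by (unfold marker; simpl; rewrite length_app, repeat_length; simpl; lia).
  assert (Hmid : forall t, t < c -> nth (S t) (marker c) false = false)
    by (intros t Ht; simpl; rewrite app_nth1, nth_repeat_lt by (rewrite ?repeat_length; lia);
        reflexivity).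
  assert (Hlast : nth (S c) (marker c) false = true)
    by (simpl; rewrite app_nth2, repeat_length, Nat.sub_diag by (rewrite repeat_length; lia);
        reflexivity).
  unfold in_cyl. rewrite Hlen. split.
  - intros H. repeat split.
    + apply (H 0). lia.
    + intros t Ht. rewrite H by lia. replace t with (S (t - 1)) by lia. apply Hmid. lia.
    + rewrite H by lia. exact Hlast.
  - intros [H0 [Hm Hc]] [|i] Hi; [exact H0|].
    destruct (Nat.lt_ge_cases i c) as [h|h].
    + rewrite Hmid by exact h. apply Hm. lia.
    + replace i with c by lia. rewrite Hlast. exact Hc.
Qed.

Lemma marker_unique c c' z : in_cyl (marker c) z -> in_cyl (marker c') z -> c = c'.
Proof.
  rewrite !in_cyl_marker. intros [_ [A1 A2]] [_ [B1 B2]].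
  destruct (Nat.lt_trichotomy c c') as [h|[h|h]]; [|exact h|].
  - rewrite B1 in A2 by lia. discriminate.
  - rewrite A1 in B2 by lia. discriminate.
Qed.

Lemma marker_of_first_true z t : z 0 = true -> 1 <= t -> z t = true ->
  exists c, in_cyl (marker c) z.
Proof.
  intros H0. induction t as [t IH] using lt_wf_ind. intros Ht Hzt.
  destruct (classic (exists t', 1 <= t' < t /\ z t' = true)) as [[t' [Ht' Hz']]|Hnone].
  - exact (IH t' (proj2 Ht') (proj1 Ht') Hz').
  - exists (pred t). apply in_cyl_marker. repeat split; [exact H0| |].
    + intros u Hu. destruct (z u) eqn:E; [|reflexivity].
      exfalso. apply Hnone. exists u. split; [lia|exact E].
    + replace (S (pred t)) with t by lia. exact Hzt.
Qed.

(* Query [<c, i>] with [c = <n, N>] removes the cylinder [marker c] if the [i]-th approximation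
   of [x n] is non-zero at a stage [i >= N]; every other query removes the points starting
   with [0] (the ball [word 1 = [false]]). *)
Definition neg_instance (p : nat -> nat) (m : nat) : nat :=
  let c := fst (unpair m) in let i := snd (unpair m) in
  if (snd (unpair c) <=? i) && negb (p (npair i (fst (unpair c))) =? 0) then 3 * 2 ^ S c else 1.

Definition ENegInstance : exp :=
  ECase (EDrop (EVar 0) (EPair (ESnd (EVar 1)) (EFst (EFst (EVar 1)))))
    (ESucc (ECond (EMul (ELe (ESnd (EFst (EVar 2))) (ESnd (EVar 2))) (ENonZero (EFst (EVar 0))))
                  (EMul (EConst 3) (EPow2 (ESucc (EFst (EVar 2)))))
                  (EConst 1))).

Lemma neg_instance_computes p : computes (machine ENegInstance) p (neg_instance p).
Proof.
  apply (lookup_machine_computes _ _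
           (fun m => npair (snd (unpair m)) (fst (unpair (fst (unpair m)))))).
  - reflexivity.
  - intros k m R _. rewrite den_ECond, den_EMul, den_ELe, den_ENonZero, den_EMul, den_EConst,
      den_EPow2, den_EConst. cbn [den nth]. rewrite unpair_npair. cbn [fst]. unfold neg_instance.
    destruct (snd (unpair (fst (unpair m))) <=? snd (unpair m)),
      (p (npair (snd (unpair m)) (fst (unpair (fst (unpair m))))) =? 0); reflexivity.
Qed.

Lemma neg_instance_marker p c i :
  snd (unpair c) <= i -> p (npair i (fst (unpair c))) <> 0 ->
  neg_instance p (npair c i) = 3 * 2 ^ S c.
Proof.
  intros Hi Hp. unfold neg_instance. rewrite unpair_npair. cbn [fst snd].
  apply Nat.leb_le in Hi. apply Nat.eqb_neq in Hp. rewrite Hi, Hp. reflexivity.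
Qed.

Lemma neg_instance_cases p m : neg_instance p m = 1 \/
  (neg_instance p m = 3 * 2 ^ S (fst (unpair m)) /\
   snd (unpair (fst (unpair m))) <= snd (unpair m) /\
   p (npair (snd (unpair m)) (fst (unpair (fst (unpair m))))) <> 0).
Proof.
  unfold neg_instance.
  destruct (Nat.leb_spec (snd (unpair (fst (unpair m)))) (snd (unpair m))),
    (Nat.eqb_spec (p (npair (snd (unpair m)) (fst (unpair (fst (unpair m)))))) 0);
    cbn [andb negb]; auto.
Qed.

Lemma neg_instance_singleton p x z : rep Baire_lim p x -> ~ (exists n, x n = 0) ->
  closed_of (neg_instance p) z -> forall t, z t = (t =? 0).
Proof.
  intros Hp Hx Hz.
  assert (Z0 : z 0 = true).
  { destruct (z 0) eqn:E; [reflexivity|]. exfalso. apply Hz. exists (npair (npair 0 1) 0).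
    unfold neg_instance. rewrite !unpair_npair. apply in_ball_1. exact E. }
  intros [|t]; [exact Z0|]. cbn. destruct (z (S t)) eqn:E; [exfalso|reflexivity].
  destruct (marker_of_first_true z (S t) Z0 ltac:(lia) E) as [c Hc].
  destruct (Hp (fst (unpair c))) as [N HN].
  apply Hz. exists (npair c (snd (unpair c) + N)).
  rewrite neg_instance_marker by (lia || (rewrite HN by lia; intros H0; apply Hx; eauto)).
  unfold in_ball. rewrite word_marker. exact Hc.
Qed.

Lemma marker_in_neg_instance p (x : nat -> nat) n N : x n = 0 ->
  (forall i, N <= i -> p (npair i n) = x n) ->
  forall z, in_cyl (marker (npair n N)) z -> closed_of (neg_instance p) z.
Proof.
  intros Hxn HN z Hz [m Hm].
  destruct (neg_instance_cases p m) as [E|[E [E1 E2]]]; rewrite E in Hm.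
  - rewrite in_ball_1 in Hm. apply in_cyl_marker in Hz as [Hz0 _]. congruence.
  - unfold in_ball in Hm. rewrite word_marker in Hm.
    rewrite <- (marker_unique _ _ _ Hz Hm), unpair_npair in E1, E2. cbn [fst snd] in E1, E2.
    apply E2. rewrite HN by exact E1. exact Hxn.
Qed.

Lemma null_neg_instance p x : rep Baire_lim p x ->
  null_set (closed_of (neg_instance p)) <-> ~ exists n, x n = 0.
Proof.
  intros Hp. split.
  - intros Hnull [n Hn]. destruct (Hp n) as [N HN].
    exact (not_null_of_cyl_subset _ _ (marker_in_neg_instance p x n N Hn HN) Hnull).
  - intros Hx. apply (null_of_subset_point _ (fun t => t =? 0)).
    intros z Hz. exact (neg_instance_singleton p x z Hp Hx Hz).
Qed.

(** * NEG reduces to LPO' *)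

(* Whether the [j]-th word of length [i] extends [word (pv n)], assuming [word (pv n)] has
   length [i - t]. *)
Definition hitsb (pv : nat -> nat) (i j n t : nat) : bool :=
  (S (pv n) * 2 ^ t <=? 2 ^ i + j) && (2 ^ i + j <? S (S (pv n)) * 2 ^ t).

Definition uncoveredb (pv : nat -> nat) (i j : nat) : bool :=
  sumto (fun n => sumto (fun t => ind (hitsb pv i j n t)) (S i)) i =? 0.

Definition uncovered_count (pv : nat -> nat) (i : nat) : nat :=
  sumto (fun j => ind (uncoveredb pv i j)) (2 ^ i).

Definition covered (pv : nat -> nat) (i : nat) (z : nat -> bool) : Prop :=
  exists n, n < i /\ in_ball (pv n) z /\ length (word (pv n)) <= i.

Lemma uncovered_count_ext pv pv' i : (forall n, n < i -> pv n = pv' n) ->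
  uncovered_count pv i = uncovered_count pv' i.
Proof.
  intros H. apply sumto_ext. intros j _. unfold uncoveredb. do 2 f_equal.
  apply sumto_ext. intros n Hn. apply sumto_ext. intros t _. unfold hitsb. rewrite H; auto.
Qed.

Lemma hitsb_shift_unique u X i t : 2 ^ i <= X < 2 ^ S i -> t <= i ->
  bin u * 2 ^ t <= X < S (bin u) * 2 ^ t -> t = i - length u /\ length u <= i.
Proof.
  intros HX Ht [H1 H2]. pose proof (bin_range u).
  assert (2 ^ (length u + t) < 2 ^ S i).
  { rewrite Nat.pow_add_r.
    assert (2 ^ length u * 2 ^ t <= bin u * 2 ^ t) by (apply Nat.mul_le_mono_r; lia). lia. }
  assert (2 ^ i < 2 ^ (S (length u) + t)).
  { rewrite Nat.pow_add_r.
    assert (S (bin u) * 2 ^ t <= 2 ^ S (length u) * 2 ^ t) by (apply Nat.mul_le_mono_r; lia).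
    lia. }
  apply Nat.pow_lt_mono_r_iff in H0; [|lia]. apply Nat.pow_lt_mono_r_iff in H3; [|lia]. lia.
Qed.

Lemma hitsb_iff pv i z n :
  (exists t, t < S i /\ hitsb pv i (bin_prefix z i - 2 ^ i) n t = true) <->
  in_ball (pv n) z /\ length (word (pv n)) <= i.
Proof.
  pose proof (bin_prefix_range z i) as HX.
  unfold hitsb. replace (2 ^ i + (bin_prefix z i - 2 ^ i)) with (bin_prefix z i) by lia.
  rewrite <- (bin_word (pv n)). split.
  - intros [t [Ht Hm]]. rewrite Bool.andb_true_iff, Nat.leb_le, Nat.ltb_lt in Hm.
    destruct (hitsb_shift_unique _ _ i t HX ltac:(lia) Hm) as [-> Hl].
    split; [apply (in_cyl_iff_bin_prefix _ z i Hl)|]; assumption.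
  - intros [Hb Hl]. exists (i - length (word (pv n))). split; [lia|].
    rewrite Bool.andb_true_iff, Nat.leb_le, Nat.ltb_lt.
    apply (in_cyl_iff_bin_prefix _ z i Hl). exact Hb.
Qed.

Lemma uncoveredb_iff pv i z :
  uncoveredb pv i (bin_prefix z i - 2 ^ i) = true <-> ~ covered pv i z.
Proof.
  unfold uncoveredb, covered. rewrite Nat.eqb_eq, sumto_eq0. split.
  - intros H [n [Hn Hb]]. apply hitsb_iff in Hb as [t [Ht Hh]].
    specialize (H n Hn). rewrite sumto_eq0 in H. specialize (H t Ht). rewrite Hh in H.
    discriminate.
  - intros H n Hn. apply sumto_eq0. intros t Ht.
    destruct (hitsb _ _ _ _ _) eqn:Hh; [|reflexivity].
    exfalso. apply H. exists n. split; [exact Hn|]. apply hitsb_iff. eauto.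
Qed.

Lemma uncoveredb_point_of pv i j : j < 2 ^ i ->
  uncoveredb pv i j = true <-> ~ covered pv i (point_of (2 ^ i + j)).
Proof.
  intros Hj. rewrite <- uncoveredb_iff, bin_prefix_point_of; [|rewrite Nat.pow_succ_r'; lia].
  replace (2 ^ i + j - 2 ^ i) with j by lia. reflexivity.
Qed.

Lemma sumto_double f g M : (forall j, j < 2 * M -> f j <= g (j / 2)) ->
  sumto f (2 * M) <= 2 * sumto g M.
Proof.
  induction M as [|M IH]; intros H; [simpl; lia|].
  replace (2 * S M) with (S (S (2 * M))) by lia. cbn [sumto].
  specialize (IH ltac:(intros; apply H; lia)).
  pose proof (H (2 * M) ltac:(lia)) as H0. pose proof (H (S (2 * M)) ltac:(lia)) as H1.
  replace (2 * M / 2) with M in H0 by (rewrite Nat.mul_comm, Nat.div_mul; lia).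
  replace (S (2 * M) / 2) with M in H1 by (apply Nat.div_unique with 1; lia).
  lia.
Qed.

(* A word uncovered at level [i+1] has an uncovered parent at level [i], since the balls
   available at level [i] are still available at level [i+1]. *)
Lemma uncovered_count_succ pv i : uncovered_count pv (S i) <= 2 * uncovered_count pv i.
Proof.
  unfold uncovered_count. rewrite Nat.pow_succ_r'. apply sumto_double. intros j Hj.
  set (z := point_of (2 ^ S i + j)).
  assert (E1 : bin_prefix z (S i) = 2 ^ S i + j)
    by (apply bin_prefix_point_of; rewrite !Nat.pow_succ_r'; lia).
  destruct (bin_prefix_split z i (S i) ltac:(lia)) as [r [Hr E]].
  replace (S i - i) with 1 in * by lia. simpl in Hr.
  pose proof (bin_prefix_range z i).
  assert (E2 : j / 2 = bin_prefix z i - 2 ^ i).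
  { pose proof (Nat.div_mod_eq j 2). pose proof (Nat.mod_upper_bound j 2 ltac:(lia)).
    rewrite Nat.pow_succ_r' in *. simpl in E. lia. }
  replace j with (bin_prefix z (S i) - 2 ^ S i) at 1 by lia. rewrite E2.
  destruct (uncoveredb pv (S i) _) eqn:Hs; [|cbn [ind]; lia].
  destruct (uncoveredb pv i _) eqn:Hl; [cbn [ind]; lia|].
  exfalso. apply uncoveredb_iff in Hs. apply Hs.
  apply Bool.not_true_iff_false in Hl. rewrite uncoveredb_iff in Hl. apply NNPP in Hl.
  destruct Hl as [n [Hn [Hb Hlen]]]. exists n. repeat split; auto; lia.
Qed.

Lemma uncovered_count_small_stable pv k i0 : uncovered_count pv i0 * 2 ^ k < 2 ^ i0 ->
  forall i, i0 <= i -> uncovered_count pv i * 2 ^ k < 2 ^ i.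
Proof.
  intros H. induction 1 as [|i _ IH]; [exact H|].
  pose proof (uncovered_count_succ pv i). rewrite Nat.pow_succ_r'. nia.
Qed.

Definition lpo_instance (p : nat -> nat) (m : nat) : nat :=
  ind (uncovered_count p (fst (unpair m)) * 2 ^ snd (unpair m) <? 2 ^ fst (unpair m)).

(* Environment [t; n; j; v; L; m]: the ball [pv n] is read from the input prefix [L],
   and [i = fst m]. *)
Definition EHits : exp :=
  EMul (ELe (EMul (ESucc (EHead (EDrop (EVar 4) (EVar 1)))) (EPow2 (EVar 0)))
            (EAdd (EPow2 (EFst (EVar 5))) (EVar 2)))
       (ELt (EAdd (EPow2 (EFst (EVar 5))) (EVar 2))
            (EMul (ESucc (ESucc (EHead (EDrop (EVar 4) (EVar 1))))) (EPow2 (EVar 0)))).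

Definition EUncoveredCount : exp :=
  ESum (EIsZero (ESum (ESum EHits (ESucc (EFst (EVar 4)))) (EFst (EVar 3))))
       (EPow2 (EFst (EVar 2))).

Definition ELpoInstance : exp :=
  ECase (EDrop (EVar 0) (EFst (EVar 1)))
    (ESucc (ELt (EMul EUncoveredCount (EPow2 (ESnd (EVar 2)))) (EPow2 (EFst (EVar 2))))).

Lemma ind_andb a b : ind a * ind b = ind (a && b).
Proof. destruct a, b; reflexivity. Qed.

Lemma den_EUncoveredCount v L m : den EUncoveredCount [v; L; m] =
  uncovered_count (fun n => list_head (list_drop L n)) (fst (unpair m)).
Proof.
  unfold EUncoveredCount. rewrite den_ESum, den_EPow2. cbn [den nth].
  apply sumto_ext. intros j _. rewrite den_EIsZero, den_ESum. cbn [den nth].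
  unfold uncoveredb. do 2 f_equal. apply sumto_ext. intros n _. rewrite den_ESum. cbn [den nth].
  apply sumto_ext. intros t _. unfold EHits.
  rewrite den_EMul, den_ELe, den_ELt, !den_EMul, !den_EAdd, !den_EPow2. cbn [den nth].
  rewrite !den_EHead, !den_EDrop. cbn [den nth]. apply ind_andb.
Qed.

Lemma lpo_instance_computes p : computes (machine ELpoInstance) p (lpo_instance p).
Proof.
  apply (lookup_machine_computes _ _ (fun m => fst (unpair m))); [reflexivity|].
  intros k m R Hk. rewrite den_ELt, den_EMul, !den_EPow2. cbn [den nth].
  rewrite den_EUncoveredCount. unfold lpo_instance. do 3 f_equal.
  apply uncovered_count_ext. intros n Hn. apply list_head_drop_prefix. lia.
Qed.

Definition lpo_value (p : nat -> nat) (k : nat) : nat :=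
  if excluded_middle_informative (exists i, uncovered_count p i * 2 ^ k < 2 ^ i) then 1 else 0.

Lemma lpo_instance_rep p : rep Baire_lim (lpo_instance p) (lpo_value p).
Proof.
  intros k. unfold lpo_value, lpo_instance.
  destruct (excluded_middle_informative _) as [[i0 H]|H]; [exists i0|exists 0];
    intros i Hi; rewrite unpair_npair; cbn [fst snd].
  - apply (uncovered_count_small_stable p k i0 H) in Hi. apply Nat.ltb_lt in Hi.
    rewrite Hi. reflexivity.
  - destruct (Nat.ltb_spec (uncovered_count p i * 2 ^ k) (2 ^ i)); [|reflexivity].
    exfalso. eauto.
Qed.

Lemma lpo_value_eq0 p k : lpo_value p k = 0 <-> ~ exists i, uncovered_count p i * 2 ^ k < 2 ^ i.
Proof. unfold lpo_value. destruct (excluded_middle_informative _); split; intros; tauto || lia. Qed.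

Lemma half_double l : 2 * l / 2 = l.
Proof. rewrite Nat.mul_comm, Nat.div_mul; lia. Qed.

Lemma half_double_succ l : S (2 * l) / 2 = l.
Proof. symmetry. apply Nat.div_unique with 1; lia. Qed.

Lemma finite_level_cover p (A : (nat -> bool) -> Prop) s : rep ClosedCantor p A ->
  (forall z, A z -> exists l, in_cyl (s l) z) ->
  exists J i, (forall l, l < J -> length (s l) <= i) /\
              forall z, ~ covered p i z -> exists l, l < J /\ in_cyl (s l) z.
Proof.
  intros HA Hcov.
  set (F := fun l => if Nat.even l then s (l / 2) else word (p (l / 2))).
  destruct (cyl_finite_subcover F []) as [J HJ].
  { intros z _. destruct (classic (A z)) as [Az|Az].
    - destruct (Hcov z Az) as [l Hl]. exists (2 * l).
      unfold F. rewrite Nat.even_even, half_double. exact Hl.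
    - rewrite (HA z) in Az. apply NNPP in Az as [n Hn]. exists (S (2 * n)).
      unfold F. rewrite Nat.even_succ, Nat.odd_even, half_double_succ. exact Hn. }
  set (i := J + sumto (fun l => length (F l)) (2 * J)).
  assert (HF : forall l, l < 2 * J -> length (F l) <= i)
    by (intros l Hl; pose proof (le_sumto (fun l => length (F l)) _ _ Hl); unfold i; lia).
  exists J, i. split.
  - intros l Hl. specialize (HF (2 * l) ltac:(lia)). unfold F in HF.
    rewrite Nat.even_even, half_double in HF. exact HF.
  - intros z Hnc. destruct (HJ z ltac:(intros t Ht; simpl in Ht; lia)) as [l [Hl Hz]].
    assert (l / 2 < J) by (pose proof (Nat.Div0.div_le_upper_bound l 2 l); lia).
    specialize (HF l ltac:(lia)). unfold F in Hz, HF. destruct (Nat.even l).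
    + exists (l / 2). auto.
    + exfalso. apply Hnc. exists (l / 2). repeat split; auto. unfold i. lia.
Qed.

Lemma uncovered_count_le_cover p s J i : (forall l, l < J -> length (s l) <= i) ->
  (forall z, ~ covered p i z -> exists l, l < J /\ in_cyl (s l) z) ->
  uncovered_count p i <= sumto (fun l => 2 ^ (i - length (s l))) J.
Proof.
  intros Hs Hcov.
  pose proof (union_bound (uncoveredb p i) (fun _ => true) (fun l => extendsb (s l) i) (2 ^ i) J)
    as H.
  rewrite (sumto_ext (fun l => ind true * sumto (fun j => ind (extendsb (s l) i j)) (2 ^ i))
                     (fun l => 2 ^ (i - length (s l)))) in H.
  - apply H. intros j Hj Hu. apply uncoveredb_point_of in Hu; [|exact Hj].
    destruct (Hcov _ Hu) as [l [Hl Hc]]. exists l. repeat split; auto.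
    apply extendsb_point_of; auto.
  - intros l Hl. simpl. rewrite Nat.add_0_r. apply count_extendsb; auto.
Qed.

Lemma uncovered_small_of_null p A : rep ClosedCantor p A -> null_set A ->
  forall k, exists i, uncovered_count p i * 2 ^ k < 2 ^ i.
Proof.
  intros HA Hnull k. destruct (Hnull (S k)) as [s [Hcov Hsum]].
  destruct (finite_level_cover p A s HA Hcov) as [J [i [Hlen Hunc]]].
  pose proof (uncovered_count_le_cover p s J i Hlen Hunc) as Hc.
  apply le_INR, (Rmult_le_compat_r ((/ 2) ^ i)) in Hc; [|left; apply half_pow_pos].
  rewrite weight_level in Hc by exact Hlen.
  pose proof (weight_bound s _ Hsum J) as Hw.
  assert (Hle : (INR (uncovered_count p i) * (/ 2) ^ i <= (/ 2) ^ S k)%R) by lra.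
  apply INR_mul_half_pow_le in Hle. rewrite Nat.pow_succ_r' in Hle.
  exists i. pose proof (Nat.pow_nonzero 2 i). lia.
Qed.

Lemma length_word_level i m : m < 2 ^ i -> length (word (2 ^ i + m - 1)) = i.
Proof.
  intros Hm. apply length_of_bin_range. rewrite bin_word, Nat.pow_succ_r'.
  pose proof (Nat.pow_nonzero 2 i). lia.
Qed.

(* The uncovered words of length [i], padded with negligible cylinders. *)
Definition uncovered_cover (p : nat -> nat) (i k m : nat) : list bool :=
  if (m <? 2 ^ i) && uncoveredb p i m then word (2 ^ i + m - 1) else repeat false (S (S k + m)).

Lemma uncovered_cover_covers p A i k z : rep ClosedCantor p A -> A z ->
  exists m, in_cyl (uncovered_cover p i k m) z.
Proof.
  intros HA Az. exists (bin_prefix z i - 2 ^ i).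
  pose proof (bin_prefix_range z i) as HX. rewrite Nat.pow_succ_r' in HX.
  assert (Hu : uncoveredb p i (bin_prefix z i - 2 ^ i) = true).
  { apply uncoveredb_iff. intros [n [_ [Hb _]]]. apply (HA z) in Az. eauto. }
  unfold uncovered_cover. rewrite Hu.
  replace (_ <? 2 ^ i) with true by (symmetry; apply Nat.ltb_lt; lia). cbn [andb].
  replace (2 ^ i + (bin_prefix z i - 2 ^ i) - 1) with (bin_prefix z i - 1) by lia.
  rewrite (word_of_bin (bin_prefix z i - 1) (map z (seq 0 i))) by (unfold bin_prefix in *; lia).
  apply in_cyl_iff_prefix. rewrite length_map, length_seq. reflexivity.
Qed.

Lemma uncovered_cover_weight p i k N : uncovered_count p i * 2 ^ S k < 2 ^ i ->
  (sum_f_R0 (fun m => (/ 2) ^ length (uncovered_cover p i k m)) N <= (/ 2) ^ k)%R.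
Proof.
  intros Hi. set (g := fun m => if m <? 2 ^ i then ind (uncoveredb p i m) else 0).
  apply Rle_trans with
    (sum_f_R0 (fun m => INR (g m) * (/ 2) ^ i + (/ 2) ^ (S (S k + m)))%R N).
  - apply sum_Rle. intros m _. unfold uncovered_cover, g.
    pose proof (half_pow_pos i). pose proof (half_pow_pos (S (S k + m))).
    destruct (Nat.ltb_spec m (2 ^ i)), (uncoveredb p i m); cbn [andb ind INR];
      rewrite ?repeat_length, ?length_word_level by assumption; lra.
  - rewrite sum_plus. replace ((/ 2) ^ k)%R with ((/ 2) ^ S k + (/ 2) ^ S k)%R by (simpl; lra).
    apply Rplus_le_compat; [|apply sum_half_pow_le].
    rewrite sum_f_R0_rsum, rsum_mulr, <- INR_sumto.
    apply Rle_trans with (INR (uncovered_count p i) * (/ 2) ^ i)%R.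
    + apply Rmult_le_compat_r; [left; apply half_pow_pos|]. apply le_INR.
      unfold g. rewrite sumto_min. apply sumto_le_index. lia.
    + apply INR_mul_half_pow_le. lia.
Qed.

Lemma null_iff_uncovered_small p A : rep ClosedCantor p A ->
  null_set A <-> forall k, exists i, uncovered_count p i * 2 ^ k < 2 ^ i.
Proof.
  intros HA. split; [exact (uncovered_small_of_null p A HA)|].
  intros H k. destruct (H (S k)) as [i Hi]. exists (uncovered_cover p i k). split.
  - intros z Az. exact (uncovered_cover_covers p A i k z HA Az).
  - intros N. exact (uncovered_cover_weight p i k N Hi).
Qed.

Lemma null_iff_lpo_value_nonzero p A : rep ClosedCantor p A ->
  null_set A <-> ~ exists k, lpo_value p k = 0.
Proof.
  intros HA. rewrite (null_iff_uncovered_small p A HA). split.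
  - intros H [k Hk]. apply lpo_value_eq0 in Hk. apply Hk, H.
  - intros H k. apply NNPP. intros C. apply H. exists k. apply lpo_value_eq0, C.
Qed.

Lemma NEG_total (A : (nat -> bool) -> Prop) : exists b, NEG A b.
Proof.
  destruct (classic (null_set A)); [exists true|exists false]; unfold NEG;
    split; intros; auto; try discriminate; tauto.
Qed.

Lemma LPO'_total (x : nat -> nat) : exists b, LPO' x b.
Proof.
  destruct (classic (exists n, x n = 0)); [exists false|exists true]; unfold LPO';
    split; intros; auto; try discriminate; tauto.
Qed.

Lemma LPO'_of_NEG x A b : (null_set A <-> ~ exists n, x n = 0) -> NEG A b -> LPO' x b.
Proof.
  unfold NEG, LPO'. intros HA Hb. rewrite HA in Hb.
  destruct b; split; intros H; try discriminate.
  - exfalso. apply (proj1 Hb eq_refl), H.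
  - apply NNPP. intros C. discriminate (proj2 Hb C).
  - reflexivity.
Qed.

Lemma NEG_of_LPO' x A b : (null_set A <-> ~ exists n, x n = 0) -> LPO' x b -> NEG A b.
Proof.
  unfold NEG, LPO'. intros HA Hb. rewrite HA.
  destruct b; split; intros H; try reflexivity; try discriminate.
  - intros C. discriminate (proj2 Hb C).
  - exfalso. apply H, Hb. reflexivity.
Qed.

Theorem lemma7p9 : sW_equiv LPO' NEG.
Proof.
  split.
  - apply (sW_le_of_computable_preprocessing _ _ _ _ _ _ _ neg_instance_computes).
    intros p x Hp. exists (closed_of (neg_instance p)).
    split; [intros z; reflexivity|]. split; [apply NEG_total|].
    intros b. apply LPO'_of_NEG, null_neg_instance, Hp.
  - apply (sW_le_of_computable_preprocessing _ _ _ _ _ _ _ lpo_instance_computes).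
    intros p A HA. exists (lpo_value p).
    split; [apply lpo_instance_rep|]. split; [apply LPO'_total|].
    intros b. apply NEG_of_LPO', null_iff_lpo_value_nonzero, HA.
Qed.
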